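(* Let $f\colon\prod_{i\in[n]}X_i\to Y$ satisfy condition (BC), let $\varphi_k\colon X_k\to Y$ ($k\in[n]$) be maps satisfying the boundary condition, and let $p\colon Y^n\to Y$ be a polynomial function. Put $a_k=\varphi_k(0_{X_k})$, $b_k=\varphi_k(1_{X_k})$, and define the polynomial functions $$p^-(\mathbf{y})=\bigvee_{I\subseteq[n]}\Big(c_I^-\wedge\bigwedge_{i\in I}y_i\Big),\quad c_I^-=\operatorname{cl}\Big(f(\widehat{\mathbf{1}}_I)\wedge\bigwedge_{i\notin I}\overline{a_i}\Big),$$ $$p^+(\mathbf{y})=\bigvee_{I\subseteq[n]}\Big(c_I^+\wedge\bigwedge_{i\in I}y_i\Big),\quad c_I^+=\operatorname{int}\Big(f(\widehat{\mathbf{1}}_I)\vee\bigvee_{i\in I}\overline{b_i}\Big).$$ Then $f(\mathbf{x})=p(\varphi_1(x_1),\ldots,\varphi_n(x_n))$ for all $\mathbf{x}\in\prod_{i\in[n]}X_i$ if and only if $\Phi_k^-\le\varphi_k\le\Phi_k^+$ for each $k\in[n]$ and $p^-\le p\le p^+$ (pointwise on $Y^n$).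
   Context: $Y$ is a finite distributive lattice identified with a sublattice of $\mathcal{P}(U)$ for a finite set $U$, with least element $0=\emptyset$, greatest element $1=U$, and $\wedge,\vee$ being intersection and union; $\overline{S}=U\setminus S$. For $S\subseteq U$, $\operatorname{cl}(S)=\bigwedge\{y\in Y: y\ge S\}$, $\operatorname{int}(S)=\bigvee\{y\in Y: y\le S\}$. Empty meets equal $U$ and empty joins equal $\emptyset$. $[n]=\{1,\ldots,n\}$; $X_1,\ldots,X_n$ are arbitrary sets with at least two elements, each with two fixed distinct elements $0_{X_k},1_{X_k}$ (written $0,1$). For $\mathbf{x}\in\prod_i X_i$ and $a\in X_k$, $\mathbf{x}_k^a$ is $\mathbf{x}$ with $k$-th component replaced by $a$. For $I\subseteq[n]$, $\widehat{\mathbf{1}}_I$ is the tuple whose $i$-th component is $1_{X_i}$ if $i\in I$ and $0_{X_i}$ otherwise. A map $\varphi_k\colon X_k\to Y$ satisfies the boundary condition if $\varphi_k(0_{X_k})\le\varphi_k(x_k)\le\varphi_k(1_{X_k})$ for all $x_k$. A polynomial function $Y^n\to Y$ is a composition of $\wedge,\vee$ with variables and constants. Condition (BC): $f(\mathbf{x}_k^0)\le f(\mathbf{x})\le f(\mathbf{x}_k^1)$ for all $k$ and $\mathbf{x}$. For $k\in[n]$, $a_k\in X_k$: $$\Phi_k^-(a_k)=\bigvee_{\mathbf{x}:\,x_k=a_k}\operatorname{cl}\big(f(\mathbf{x})\wedge\overline{f(\mathbf{x}_k^0)}\big),\qquad \Phi_k^+(a_k)=\bigwedge_{\mathbf{x}:\,x_k=a_k}\operatorname{int}\big(f(\mathbf{x})\vee\overline{f(\mathbf{x}_k^1)}\big),$$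 ranging over all $\mathbf{x}$ with $k$-th component $a_k$. *)

From mathcomp Require Import all_boot.
From Stdlib Require Import ClassicalEpsilon.
Set Implicit Arguments.
Unset Strict Implicit.
Unset Printing Implicit Defensive.

(* Classical boolean reflection of a proposition (used to form joins/meets of
   possibly infinite families of subsets of the finite set U). *)
Definition asbool (P : Prop) : bool :=
  if excluded_middle_informative P then true else false.

Section Lat.
Variable U : finType.

Definition is_bounded_sublattice (Y : {set {set U}}) : Prop :=
  [/\ set0 \in Y, setT \in Y,
      (forall a b, a \in Y -> b \in Y -> a :&: b \in Y) &
      (forall a b, a \in Y -> b \in Y -> a :|: b \in Y)].

(* closure and interior w.r.t. Y (empty meet = U, empty join = set0) *)
Definition cl (Y : {set {set U}}) (S : {set U}) : {set U} :=
  \bigcap_(y in Y | S \subset y) y.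
Definition int (Y : {set {set U}}) (S : {set U}) : {set U} :=
  \bigcup_(y in Y | y \subset S) y.

Definition bigJoin (A : Type) (P : A -> Prop) (F : A -> {set U}) : {set U} :=
  [set u | asbool (exists a, P a /\ u \in F a)].
Definition bigMeet (A : Type) (P : A -> Prop) (F : A -> {set U}) : {set U} :=
  [set u | asbool (forall a, P a -> u \in F a)].
End Lat.

Inductive lterm (U : finType) (n : nat) : Type :=
| LVar of 'I_n
| LConst of {set U}
| LMeet of lterm U n & lterm U n
| LJoin of lterm U n & lterm U n.

Fixpoint leval (U : finType) (n : nat) (t : lterm U n) (y : 'I_n -> {set U})
  : {set U} :=
  match t with
  | LVar i => y i
  | LConst c => c
  | LMeet t1 t2 => leval t1 y :&: leval t2 y
  | LJoin t1 t2 => leval t1 y :|: leval t2 y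
  end.

Fixpoint lconsts_in (U : finType) (n : nat) (Y : {set {set U}}) (t : lterm U n)
  : Prop :=
  match t with
  | LVar _ => True
  | LConst c => c \in Y
  | LMeet t1 t2 | LJoin t1 t2 => lconsts_in Y t1 /\ lconsts_in Y t2
  end.

Definition polynomial_function (U : finType) (n : nat) (Y : {set {set U}})
  (p : ('I_n -> {set U}) -> {set U}) : Prop :=
  exists t : lterm U n, lconsts_in Y t /\
    forall y, (forall i, y i \in Y) -> p y = leval t y.

Section Pseudo.
Variables (U : finType) (Y : {set {set U}}) (n : nat) (X : 'I_n -> Type)
  (x0 x1 : forall i, X i) (f : (forall i, X i) -> {set U}).

Definition upd (x : forall i, X i) (k : 'I_n) (a : X k) : forall i, X i :=
  dfwith x a.

Definition BC : Prop :=
  forall (k : 'I_n) (x : forall i, X i),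
    f (upd x (x0 k)) \subset f x /\ f x \subset f (upd x (x1 k)).

Definition Phi_minus (k : 'I_n) (a : X k) : {set U} :=
  bigJoin (fun x : forall i, X i => x k = a)
          (fun x => cl Y (f x :&: ~: f (upd x (x0 k)))).

Definition Phi_plus (k : 'I_n) (a : X k) : {set U} :=
  bigMeet (fun x : forall i, X i => x k = a)
          (fun x => int Y (f x :|: ~: f (upd x (x1 k)))).

Definition hat1 (I : {set 'I_n}) : forall i, X i :=
  fun i => if i \in I then x1 i else x0 i.
End Pseudo.

From mathcomp Require Import all_boot.
From Stdlib Require Import ClassicalEpsilon FunctionalExtensionality.
Set Implicit Arguments. Unset Strict Implicit. Unset Printing Implicit Defensive.

(* The whole argument rests on one observation about lattice terms over P(U):
   whether a point u lies in t(y) depends only on the "trace"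
   {i | u \in y_i}, monotonically (leval_mono_at).  Hence t(y) can be
   compared with t(1_I), where 1_I is the indicator tuple of I (an element
   of Y when t has constants in Y): on /\_{i in I} y_i, t(1_I) lies below
   t(y), and a point u of t(y) lies in t(1_I) for I its trace.

   Necessity: if f = t o phi, then changing one coordinate x_k only affects
   points of phi_k(x_k) (f_upd_mono); this yields Phi^- <= phi_k <= Phi^+,
   and comparing f(1^_I) with t(1_I) yields p^- <= p <= p^+.
   Sufficiency: walking from x to 1^_I one coordinate at a time
   (coord_path_ind), condition (BC) and the bounds Phi^- <= phi_k <= Phi^+
   keep a point u inside f along the walk; hence f(x) lies between p^-(phi x)
   and p^+(phi x), which by hypothesis both equal p(phi x). *)

Lemma asboolP (P : Prop) : asbool P = true <-> P.
Proof. by rewrite /asbool; case: excluded_middle_informative. Qed.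

Lemma in_bigJoin (U : finType) A (P : A -> Prop) (F : A -> {set U}) u :
  u \in bigJoin P F <-> exists a, P a /\ u \in F a.
Proof. by rewrite /bigJoin inE; exact: asboolP. Qed.

Lemma in_bigMeet (U : finType) A (P : A -> Prop) (F : A -> {set U}) u :
  u \in bigMeet P F <-> forall a, P a -> u \in F a.
Proof. by rewrite /bigMeet inE; exact: asboolP. Qed.

Section ClosureInterior.
Variables (U : finType) (Y : {set {set U}}).

Lemma cl_sub (S : {set U}) : S \subset cl Y S.
Proof. by apply/bigcapsP => y /andP[]. Qed.

Lemma cl_min (S y : {set U}) : y \in Y -> S \subset y -> cl Y S \subset y.
Proof. by move=> yY Sy; apply: bigcap_inf; rewrite yY. Qed.

Lemma int_sub (S : {set U}) : int Y S \subset S.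
Proof. by apply/bigcupsP => y /andP[]. Qed.

Lemma int_max (S y : {set U}) : y \in Y -> y \subset S -> y \subset int Y S.
Proof. by move=> yY yS; apply: bigcup_sup; rewrite yY. Qed.
End ClosureInterior.

Section LatticeTerms.
Variables (U : finType) (n : nat).
Implicit Types (t : lterm U n) (y z : 'I_n -> {set U}).

Lemma leval_in (Y : {set {set U}}) t y :
  is_bounded_sublattice Y -> lconsts_in Y t -> (forall i, y i \in Y) ->
  leval t y \in Y.
Proof.
move=> [_ _ YI YU] + yY; elim: t => [i|c|t1 IH1 t2 IH2|t1 IH1 t2 IH2] //= [h1 h2].
  by apply: YI; [apply: IH1 | apply: IH2].
by apply: YU; [apply: IH1 | apply: IH2].
Qed.

Lemma leval_mono_at t y z u :
  (forall i, u \in y i -> u \in z i) -> u \in leval t y -> u \in leval t z.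
Proof.
move=> yz; elim: t => [i|c|t1 IH1 t2 IH2|t1 IH1 t2 IH2] //=; first exact: yz.
  by rewrite !inE => /andP[/IH1 -> /IH2 ->].
by rewrite !inE => /orP[/IH1 -> | /IH2 ->]; rewrite ?orbT.
Qed.

Definition ind (I : {set 'I_n}) : 'I_n -> {set U} :=
  fun i => if i \in I then setT else set0.

Lemma in_ind u I i : (u \in ind I i) = (i \in I).
Proof. by rewrite /ind; case: (i \in I); rewrite inE. Qed.

(* Since 0 and 1 lie in Y, so does t(1_I): it can bound closures and interiors. *)
Lemma leval_ind_in (Y : {set {set U}}) t I :
  is_bounded_sublattice Y -> lconsts_in Y t -> leval t (ind I) \in Y.
Proof.
move=> HY tY; apply: leval_in => // i.
by case: HY => Y0 YT _ _; rewrite /ind; case: (i \in I).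
Qed.
End LatticeTerms.

Section Tuples.
Variables (n : nat) (X : 'I_n -> Type).

Lemma dfwith_restore (w : forall i, X i) k (a b : X k) :
  w k = b -> dfwith (dfwith w a) b = w.
Proof.
move=> wb; apply: functional_extensionality_dep => i.
case: (dfwithP (dfwith w a) b i) => [|j kj]; first by rewrite wb.
by rewrite dfwith_out.
Qed.

Lemma coord_path_ind (P : (forall i, X i) -> Prop) (s t : forall i, X i) :
  (forall k (w : forall i, X i), w k = s k -> P w -> P (dfwith w (t k))) ->
  P s -> P t.
Proof.
move=> step Ps.
pose mix (m : nat) : forall i, X i := fun i => if (i < m)%N then t i else s i.
have Pmix m : (m <= n)%N -> P (mix m).
  elim: m => [|m IH] le_mn.
    by have -> : mix 0 = s by apply: functional_extensionality_dep.
  pose k := Ordinal le_mn.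
  have -> : mix m.+1 = dfwith (mix m) (t k).
    apply: functional_extensionality_dep => i.
    case: (dfwithP (mix m) (t k) i) => [|j kj]; first by rewrite /mix /= ltnSn.
    rewrite /mix ltnS leq_eqVlt; suff /negbTE -> : nat_of_ord j != m by [].
    by apply: contra kj => /eqP jm; apply/eqP/val_inj.
  by apply: step; [rewrite /mix /= ltnn | apply/IH/ltnW].
have -> : t = mix n by apply: functional_extensionality_dep => i; rewrite /mix ltn_ord.
exact: Pmix.
Qed.
End Tuples.

Section Necessity.
Variables (U : finType) (Y : {set {set U}}) (n : nat) (X : 'I_n -> Type)
  (x0 x1 : forall i, X i) (f : (forall i, X i) -> {set U})
  (phi : forall k : 'I_n, X k -> {set U}) (t : lterm U n).
Arguments phi : clear implicits.
Hypotheses (HY : is_bounded_sublattice Y) (tY : lconsts_in Y t)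
  (phiY : forall k a, phi k a \in Y)
  (fE : forall x, f x = leval t (fun i => phi i (x i))).

Lemma f_upd_mono u x k (z : X k) :
  (u \in phi k (x k) -> u \in phi k z) -> u \in f x -> u \in f (upd x z).
Proof.
rewrite !fE => uz; apply: leval_mono_at => i.
by rewrite /upd; case: (dfwithP x z i) => [|j _]; first exact: uz.
Qed.

(* If u leaves f when x_k drops to 0, then u \in phi_k(x_k); as phi_k(x_k)
   is in Y, it contains the closure of these points, so Phi^-_k <= phi_k. *)
Lemma Phi_minus_sub k c : Phi_minus Y x0 f c \subset phi k c.
Proof.
apply/subsetP => u /in_bigJoin [x [<-]] ux.
apply: (subsetP (cl_min (phiY (x k)) _)) ux.
apply/subsetP => v /setIP[vfx].
by rewrite inE; apply: contraNT => vphi; apply: f_upd_mono vfx => /(negP vphi).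
Qed.

(* Dually, a point of phi_k(x_k) lying in f(x_k^1) already lies in f(x). *)
Lemma sub_Phi_plus k c : phi k c \subset Phi_plus Y x1 f c.
Proof.
apply/subsetP => u uphi; apply/in_bigMeet => x xk; subst c.
apply: (subsetP (int_max (phiY (x k)) _)) uphi.
apply/subsetP => v vphi; rewrite !inE orbC -implybE; apply/implyP => v1.
have := f_upd_mono (z := x k) _ v1.
by rewrite /upd dfwith_restore //; apply.
Qed.

(* The I-th coefficient of p^- lies below t(1_I), whence below t(y) on
   points of /\_{i in I} y_i. *)
Lemma cminus_sub y I :
  cl Y (f (hat1 x0 x1 I) :&: \bigcap_(i | i \notin I) ~: phi i (x0 i))
    :&: \bigcap_(i in I) y i \subset leval t y.
Proof.
have cl_le_T : cl Y (f (hat1 x0 x1 I) :&: \bigcap_(i | i \notin I) ~: phi i (x0 i))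
    \subset leval t (ind U I).
  apply: cl_min (leval_ind_in I HY tY) _.
  apply/subsetP => u /setIP[]; rewrite fE => uf /bigcapP ua.
  apply: leval_mono_at uf => i; rewrite in_ind /hat1; case: ifP => // iI ui.
  by have := ua i (negbT iI); rewrite inE ui.
apply/subsetP => u /setIP[/(subsetP cl_le_T) uT /bigcapP uy].
by apply: leval_mono_at uT => i; rewrite in_ind; exact: uy.
Qed.

(* Every point u of t(y) is caught by the coefficient of p^+ indexed by
   its trace I = {i | u \in y i}. *)
Lemma leval_sub_pplus y :
  leval t y \subset \bigcup_(I : {set 'I_n})
    (int Y (f (hat1 x0 x1 I) :|: \bigcup_(i in I) ~: phi i (x1 i))
      :&: \bigcap_(i in I) y i).
Proof.
apply/subsetP => u uy; pose I := [set i | u \in y i].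
apply/bigcupP; exists I => //; rewrite inE; apply/andP; split; last first.
  by apply/bigcapP => i; rewrite inE.
have T_sub : leval t (ind U I)
    \subset f (hat1 x0 x1 I) :|: \bigcup_(i in I) ~: phi i (x1 i).
  apply/subsetP => v vT; rewrite inE.
  case: (boolP (v \in \bigcup_(i in I) _)) => vb; first by rewrite orbT.
  rewrite orbF fE; apply: leval_mono_at vT => i; rewrite in_ind /hat1 => iI.
  rewrite iI; apply: contraR vb => vi; apply/bigcupP; exists i => //.
  by rewrite inE.
apply: (subsetP (int_max (leval_ind_in I HY tY) T_sub)).
by apply: leval_mono_at uy => i ui; rewrite in_ind inE.
Qed.
End Necessity.

Section Sufficiency.
Variables (U : finType) (Y : {set {set U}}) (n : nat) (X : 'I_n -> Type)
  (x0 x1 : forall i, X i) (f : (forall i, X i) -> {set U})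
  (phi : forall k : 'I_n, X k -> {set U}).
Arguments phi : clear implicits.
Hypotheses (hBC : BC x0 x1 f)
  (phiB : forall k a, phi k (x0 k) \subset phi k a /\ phi k a \subset phi k (x1 k))
  (Phi_minus_le : forall k (c : X k), Phi_minus Y x0 f c \subset phi k c)
  (Phi_plus_ge : forall k (c : X k), phi k c \subset Phi_plus Y x1 f c).

Lemma f_hat1_trace u x :
  u \in f x -> u \in f (hat1 x0 x1 [set i | u \in phi i (x i)]).
Proof.
move=> ux; apply: (coord_path_ind (P := fun w => u \in f w) _ ux) => k w wk uw.
rewrite /hat1 inE; case: ifP => uk; first exact: (subsetP (hBC k w).2).
apply: contraFT uk => u0; rewrite -wk; apply: (subsetP (Phi_minus_le (w k))).
apply/in_bigJoin; exists w; split=> //.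
by apply: (subsetP (cl_sub _ _)); rewrite !inE uw u0.
Qed.

Lemma f_of_hat1 u x (I : {set 'I_n}) :
  (forall i, i \in I -> u \in phi i (x i)) -> u \in f (hat1 x0 x1 I) -> u \in f x.
Proof.
move=> uI u1; apply: (coord_path_ind (P := fun w => u \in f w) _ u1) => k w wk uw.
move: wk; rewrite /hat1; case: ifP => kI wk.
  have := subsetP (Phi_plus_ge (x k)) u (uI k kI).
  move/in_bigMeet => /(_ (dfwith w (x k)) (dfwith_in _ _)) /(subsetP (int_sub _ _)).
  by rewrite /upd dfwith_restore // !inE uw orbF.
by apply: (subsetP (hBC k (dfwith w (x k))).1); rewrite /upd dfwith_restore.
Qed.

(* f(x) <= p^-(phi x): a point u of f(x) lies in the coefficient indexed by
   its trace I, since u \in f(1^_I) and u avoids phi_i(x_i) >= a_i off I. *)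
Lemma f_sub_pminus x :
  f x \subset \bigcup_(I : {set 'I_n})
    (cl Y (f (hat1 x0 x1 I) :&: \bigcap_(i | i \notin I) ~: phi i (x0 i))
      :&: \bigcap_(i in I) phi i (x i)).
Proof.
apply/subsetP => u ux; pose I := [set i | u \in phi i (x i)].
apply/bigcupP; exists I => //; rewrite inE; apply/andP; split; last first.
  by apply/bigcapP => i; rewrite inE.
apply: (subsetP (cl_sub _ _)); rewrite inE f_hat1_trace //=.
apply/bigcapP => i iI; rewrite inE; apply: contra iI => ua.
by rewrite inE; apply: (subsetP (phiB (x i)).1).
Qed.

(* p^+(phi x) <= f(x): the summand of index I is inside f(1^_I), because
   phi_i(x_i) <= b_i, and then inside f(x) by f_of_hat1. *)
Lemma pplus_sub_f x :
  \bigcup_(I : {set 'I_n})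
    (int Y (f (hat1 x0 x1 I) :|: \bigcup_(i in I) ~: phi i (x1 i))
      :&: \bigcap_(i in I) phi i (x i)) \subset f x.
Proof.
apply/bigcupsP => I _; apply/subsetP => u /setIP[/(subsetP (int_sub _ _)) uc].
move/bigcapP => uI; move: uc; rewrite inE => /orP[|/bigcupP[i iI]].
  exact: f_of_hat1.
by rewrite inE (subsetP (phiB (x i)).2) // uI.
Qed.
End Sufficiency.

Theorem mainTheorem9 (U : finType) (Y : {set {set U}}) (n : nat)
  (X : 'I_n -> Type) (x0 x1 : forall i, X i)
  (f : (forall i, X i) -> {set U})
  (phi : forall k : 'I_n, X k -> {set U})
  (p : ('I_n -> {set U}) -> {set U}) :
  is_bounded_sublattice Y ->
  (forall i, x0 i <> x1 i) ->
  (forall x, f x \in Y) ->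
  BC x0 x1 f ->
  (forall k a, phi k a \in Y) ->
  (forall k a, phi k (x0 k) \subset phi k a /\ phi k a \subset phi k (x1 k)) ->
  polynomial_function Y p ->
  let a := fun k => phi k (x0 k) in
  let b := fun k => phi k (x1 k) in
  let cminus := fun I : {set 'I_n} =>
    cl Y (f (hat1 x0 x1 I) :&: \bigcap_(i | i \notin I) ~: a i) in
  let cplus := fun I : {set 'I_n} =>
    int Y (f (hat1 x0 x1 I) :|: \bigcup_(i in I) ~: b i) in
  let pminus := fun y : 'I_n -> {set U} =>
    \bigcup_(I : {set 'I_n}) (cminus I :&: \bigcap_(i in I) y i) in
  let pplus := fun y : 'I_n -> {set U} =>
    \bigcup_(I : {set 'I_n}) (cplus I :&: \bigcap_(i in I) y i) in
  (forall x : forall i, X i, f x = p (fun i => phi i (x i)))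
  <->
  ((forall (k : 'I_n) (c : X k),
      Phi_minus Y x0 f c \subset phi k c /\ phi k c \subset Phi_plus Y x1 f c)
   /\ (forall y : 'I_n -> {set U}, (forall i, y i \in Y) ->
         pminus y \subset p y /\ p y \subset pplus y)).
Proof.
move=> HY _ _ hBC phiY phiB [t [tY pt]] a b cminus cplus pminus pplus.
split=> [fp | [Phi_bounds p_bounds] x].
- have fE x : f x = leval t (fun i => phi i (x i)) by rewrite fp pt.
  split=> [k c | y yY].
    by split; [exact: (Phi_minus_sub x0 phiY fE) | exact: (sub_Phi_plus x1 phiY fE)].
  rewrite pt //; split; last exact: (leval_sub_pplus x0 x1 HY tY fE).
  by apply/bigcupsP => I _; exact: (cminus_sub x0 x1 HY tY fE).
- have [lo hi] := p_bounds _ (fun i => phiY i (x i)).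
  have Phi_lo k c := (Phi_bounds k c).1; have Phi_hi k c := (Phi_bounds k c).2.
  apply/eqP; rewrite eqEsubset; apply/andP; split.
    exact: subset_trans (f_sub_pminus hBC phiB Phi_lo x) lo.
  exact: subset_trans hi (pplus_sub_f hBC phiB Phi_hi x).
Qed.
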